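(* For every $n\ge 6$ there exist two non-isomorphic graphs $G_n,H_n$ on $n$ vertices and a graph $F$ such that, with $\mathcal{F}=\{F\}$, for every number of rounds $T\ge 0$, $$\big\|\overline{\phi^{(T)}_{\mathsf{WL}}}(G_n)-\overline{\phi^{(T)}_{\mathsf{WL}}}(H_n)\big\|=0\quad\text{and}\quad\big\|\overline{\phi^{(T)}_{\mathsf{WL},\mathcal{F}}}(G_n)-\overline{\phi^{(T)}_{\mathsf{WL},\mathcal{F}}}(H_n)\big\|=\sqrt{2}.$$
   Context: Graphs are finite, simple, undirected, unlabeled. $1$-WL: $C^1_0$ constant, $C^1_t(v)=\mathsf{RELABEL}(C^1_{t-1}(v),\{\!\{C^1_{t-1}(u):u\in N(v)\}\!\})$, $\mathsf{RELABEL}$ a fixed injective map shared by all graphs. $1$-WL$_{\mathcal{F}}$: same update with initial colour $C^{1,\mathcal{F}}_0(v)=(\ell_F(v))_{F\in\mathcal{F}}$, $\ell_F(v)=1$ if $v$ belongs to some vertex set $X$ with induced subgraph $G[X]$ isomorphic to $F$, else $0$. For round $t$, $\phi_t(G)$ (resp. $\phi_{\mathcal{F},t}(G)$) is the vector indexed by the colours occurring at round $t$ (in the graphs considered) counting vertices of $G$ of each colour; $\phi^{(T)}_{\mathsf{WL}}(G)=[\phi_0(G),\dots,\phi_T(G)]$, $\phi^{(T)}_{\mathsf{WL},\mathcal{F}}(G)=[\phi_{\mathcal{F},0}(G),\dots,\phi_{\mathcal{F},T}(G)]$; a bar denotes normalisation to unit Euclidean norm; $\|\cdot\|$ is the Euclidean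 norm. *)

From HB Require Import structures.
From mathcomp Require Import all_boot all_order all_algebra.
From mathcomp Require Import reals.
Set Implicit Arguments. Unset Strict Implicit. Unset Printing Implicit Defensive.
Import Order.TTheory GRing.Theory Num.Theory.

Definition is_graph n (e : rel 'I_n) : Prop :=
  (forall u v, e u v = e v u) /\ (forall v, e v v = false).

Definition isomorphic n (eG eH : rel 'I_n) : Prop :=
  exists f : 'I_n -> 'I_n, bijective f /\ (forall u v, eG u v = eH (f u) (f v)).

(* A round-(t+1) colour is the node
   [colour at t ; multiset of neighbour colours at t], the multiset being
   represented canonically by sorting (w.r.t. the injective pickle order).
   This is an injective RELABEL shared by all graphs. *)
Definition color := GenTree.tree (seq bool).
Definition col_le (a b : color) : bool := (pickle a <= pickle b)%N.

Fixpoint wl_color n (e : rel 'I_n) (init : 'I_n -> seq bool) (t : nat) (v : 'I_n)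
  : color :=
  match t with
  | 0 => GenTree.Leaf (init v)
  | t'.+1 => GenTree.Node 0
      [:: wl_color e init t' v;
          GenTree.Node 0 (sort col_le [seq wl_color e init t' u | u <- enum 'I_n & e v u])]
  end.

Definition no_init n : 'I_n -> seq bool := fun _ => [::].

(* l_F(v) = 1 iff v lies in a vertex set X with G[X] isomorphic to F
   (equivalently: v is in the image of an injective map f from F's vertices
   into G's such that adjacency is preserved and reflected). *)
Definition in_induced_copy k n (eF : rel 'I_k) (e : rel 'I_n) (v : 'I_n) : bool :=
  [exists f : {ffun 'I_k -> 'I_n},
     [&& injectiveb f, v \in codom f &
         [forall a, forall b, eF a b == e (f a) (f b)]]].

(* 1-WL_F with F = {F}: initial colour is the vector (l_F(v)). *)
Definition sub_init k n (eF : rel 'I_k) (e : rel 'I_n) : 'I_n -> seq bool :=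
  fun v => [:: in_induced_copy eF e v].

Definition wl_count n (e : rel 'I_n) init t (c : color) : nat :=
  #|[set v | wl_color e init t v == c]|.

Definition wl_index n (eG eH : rel 'I_n) iG iH t : seq color :=
  undup ([seq wl_color eG iG t v | v <- enum 'I_n] ++
         [seq wl_color eH iH t v | v <- enum 'I_n]).

Definition wl_sqnorm (R : realType) n (eG eH : rel 'I_n) iG iH (e : rel 'I_n) init
  (T : nat) : R :=
  \sum_(t < T.+1) \sum_(c <- wl_index eG eH iG iH t) ((wl_count e init t c)%:R) ^+ 2.

Definition wl_dist (R : realType) n (eG eH : rel 'I_n) iG iH (T : nat) : R :=
  let nG := Num.sqrt (wl_sqnorm R eG eH iG iH eG iG T) in
  let nH := Num.sqrt (wl_sqnorm R eG eH iG iH eH iH T) in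
  Num.sqrt (\sum_(t < T.+1) \sum_(c <- wl_index eG eH iG iH t)
     ((wl_count eG iG t c)%:R / nG - (wl_count eH iH t c)%:R / nH) ^+ 2).

(* Take G = C_n, H = a triangle disjoint from C_(n-3), and F = C_n.  Both
   graphs are 2-regular, so 1-WL gives all vertices of both graphs one and the
   same colour at every round, and the histograms of G and H coincide.  Every
   vertex of G lies in an induced copy of F (G itself) while no vertex of H
   does (H has n vertices and is not C_n), so 1-WL_F colours G uniformly with
   one colour and H uniformly with another one at every round: the normalised
   histograms are orthogonal unit vectors, at distance sqrt 2. *)

From HB Require Import structures.
From mathcomp Require Import all_boot all_order all_algebra zify ring.
From mathcomp Require Import reals.
Set Implicit Arguments. Unset Strict Implicit. Unset Printing Implicit Defensive.
Import Order.TTheory GRing.Theory Num.Theory.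

Fixpoint regular_color (s : seq bool) (d t : nat) : color :=
  if t is t'.+1 then
    GenTree.Node 0 [:: regular_color s d t';
                       GenTree.Node 0 (nseq d (regular_color s d t'))]
  else GenTree.Leaf s.

Lemma regular_color_inj d t : injective (fun s => regular_color s d t).
Proof. by move=> s s'; elim: t => [[]|t IHt [/IHt]]. Qed.

Lemma size_filter_enum n (p : pred 'I_n) : size [seq u <- enum 'I_n | p u] = #|p|.
Proof.
rewrite cardE /enum_mem -filter_predI.
by congr size; apply: eq_filter => u; rewrite /= andbT.
Qed.

Lemma wl_color_regular n (e : rel 'I_n) init s d :
  (forall v, init v = s) -> (forall v, #|e v| = d) ->
  forall t v, wl_color e init t v = regular_color s d t.
Proof.
move=> init_s deg_d; elim=> [|t IHt] v /=; first by rewrite init_s.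
set nbrs := sort _ _.
have -> : nbrs = nseq d (regular_color s d t).
  have /all_pred1P -> : all (pred1 (regular_color s d t)) nbrs.
    by rewrite all_sort; apply/allP => _ /mapP[u _ ->]; rewrite /= IHt.
  by rewrite size_sort size_map size_filter_enum deg_d.
by rewrite IHt.
Qed.

Lemma wl_count_constant n (e : rel 'I_n) init t a :
  (forall v, wl_color e init t v = a) ->
  forall c, wl_count e init t c = if a == c then n else 0.
Proof.
move=> col_a c; rewrite /wl_count.
under eq_finset do rewrite col_a.
by case: (a == c); rewrite ?cards0 // cardsT card_ord.
Qed.

Section ConstantColoring.
Local Open Scope ring_scope.

Lemma big_seq_support1 (V : nmodType) (I : eqType) (r : seq I) (a : I) (F : I -> V) :
  uniq r -> a \in r -> (forall c, c != a -> F c = 0) -> \sum_(c <- r) F c = F a.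
Proof.
move=> r_uniq ar F0; rewrite (bigD1_seq a) //= big1 ?addr0 // => c; exact: F0.
Qed.

Variables (n : nat) (eG eH : rel 'I_n) (iG iH : 'I_n -> seq bool).
Local Notation index t := (wl_index eG eH iG iH t).

Lemma sum_sq_wl_count_constant (R : realType) (e : rel 'I_n) init t a :
  (forall v, wl_color e init t v = a) -> a \in index t ->
  \sum_(c <- index t) (wl_count e init t c)%:R ^+ 2 = n%:R ^+ 2 :> R.
Proof.
move=> col_a a_index; rewrite (big_seq_support1 (undup_uniq _) a_index).
  by rewrite (wl_count_constant col_a) eqxx.
by move=> c; rewrite (wl_count_constant col_a) eq_sym => /negbTE ->; rewrite exprS mul0r.
Qed.

Lemma wl_sqnorm_constant (R : realType) (e : rel 'I_n) init (a : nat -> color) :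
  (forall t v, wl_color e init t v = a t) -> (forall t, a t \in index t) ->
  forall T, wl_sqnorm R eG eH iG iH e init T = n%:R ^+ 2 *+ T.+1.
Proof.
move=> col_a a_index T; rewrite /wl_sqnorm.
rewrite (eq_bigr (fun _ => n%:R ^+ 2)) ?sumr_const ?card_ord // => t _.
exact: sum_sq_wl_count_constant.
Qed.

Variables (R : realType) (a b : nat -> color).
Hypothesis n_gt0 : (0 < n)%N.
Hypothesis colG : forall t v, wl_color eG iG t v = a t.
Hypothesis colH : forall t v, wl_color eH iH t v = b t.

Let v0 : 'I_n := Ordinal n_gt0.

Lemma colG_in_index t : a t \in index t.
Proof. by rewrite mem_undup mem_cat -(colG t v0) map_f ?mem_enum. Qed.

Lemma colH_in_index t : b t \in index t.
Proof. by rewrite mem_undup mem_cat -(colH t v0) map_f ?mem_enum ?orbT. Qed.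

Lemma wl_dist_same_color T : (forall t, a t = b t) -> wl_dist R eG eH iG iH T = 0.
Proof.
move=> ab; rewrite /wl_dist (wl_sqnorm_constant R colG colG_in_index).
rewrite (wl_sqnorm_constant R colH colH_in_index).
rewrite big1 ?sqrtr0 // => t _; rewrite big1 // => c _.
by rewrite (wl_count_constant (colG t)) (wl_count_constant (colH t)) ab subrr exprS mul0r.
Qed.

Lemma wl_dist_distinct_color T :
  (forall t, a t != b t) -> wl_dist R eG eH iG iH T = Num.sqrt 2%:R.
Proof.
move=> ab; rewrite /wl_dist (wl_sqnorm_constant R colG colG_in_index).
rewrite (wl_sqnorm_constant R colH colH_in_index) /=.
congr Num.sqrt; set N := Num.sqrt _.
have N2 : N ^+ 2 = n%:R ^+ 2 *+ T.+1 :> R.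
  by rewrite sqr_sqrtr ?mulrn_wge0 ?exprn_ge0 ?ler0n.
have disjoint_counts t c : (wl_count eG iG t c * wl_count eH iH t c = 0)%N.
  rewrite (wl_count_constant (colG t)) (wl_count_constant (colH t)).
  by case: eqP => [<-|_]; rewrite ?mul0n // eq_sym (negbTE (ab t)) muln0.
have term_sum t c : ((wl_count eG iG t c)%:R / N - (wl_count eH iH t c)%:R / N) ^+ 2
    = ((wl_count eG iG t c)%:R ^+ 2 + (wl_count eH iH t c)%:R ^+ 2) / N ^+ 2 :> R.
  have := disjoint_counts t c; move: (wl_count _ _ _ _) (wl_count _ _ _ _) => x y xy0.
  by rewrite -mulrBl expr_div_n sqrrB -natrM xy0 mul0rn subr0.
rewrite (eq_bigr (fun _ => 2%:R * n%:R ^+ 2 / N ^+ 2)) => [|t _].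
  rewrite sumr_const card_ord N2; field.
  by rewrite nat1r !pnatr_eq0 -(lt0n n) n_gt0.
rewrite (eq_bigr _ (fun c _ => term_sum t c)) -mulr_suml big_split /=.
rewrite (sum_sq_wl_count_constant R (colG t) (colG_in_index t)).
by rewrite (sum_sq_wl_count_constant R (colH t) (colH_in_index t)) -mulr2n mulr_natl.
Qed.
End ConstantColoring.

Lemma in_induced_copy_self n (e : rel 'I_n) v : in_induced_copy e e v.
Proof.
apply/existsP; exists [ffun u => u]; apply/and3P; split.
- by apply/injectiveP => u w; rewrite !ffunE.
- by apply/codomP; exists v; rewrite ffunE.
- by apply/forallP => u; apply/forallP => w; rewrite !ffunE.
Qed.

Lemma in_induced_copyF n (eF e : rel 'I_n) v :
  ~ isomorphic eF e -> in_induced_copy eF e v = false.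
Proof.
move=> not_iso; apply/negbTE/existsP => -[f /and3P[/injectiveP f_inj _ /forallP f_hom]].
apply: not_iso; exists f; split; first exact: injF_bij.
by move=> u w; apply/eqP/(forallP (f_hom u)).
Qed.

Definition cycle_adj (m u v : nat) : bool :=
  (u.+1 == v) || (v.+1 == u) || (u == 0) && (v == m) || (v == 0) && (u == m).

(* The triangle 0-1-2 next to the cycle 3-4-...-m-3. *)
Definition triangle_cycle_adj (m u v : nat) : bool :=
  (u.+1 == v) && (u != 2) || (v.+1 == u) && (v != 2) ||
  (u == 0) && (v == 2) || (v == 0) && (u == 2) ||
  (u == 3) && (v == m) || (v == 3) && (u == m).

Definition cycle_graph m : rel 'I_m.+1 := fun u v => cycle_adj m u v.
Definition triangle_cycle_graph m : rel 'I_m.+1 := fun u v => triangle_cycle_adj m u v.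
Arguments cycle_graph : clear implicits.
Arguments triangle_cycle_graph : clear implicits.

Lemma cycle_graph_is_graph m : 0 < m -> is_graph (cycle_graph m).
Proof. by move=> m_gt0; split=> [u v|v]; rewrite /cycle_graph /cycle_adj; lia. Qed.

Lemma triangle_cycle_graph_is_graph m : 4 < m -> is_graph (triangle_cycle_graph m).
Proof. by move=> m_gt4; split=> [u v|v]; rewrite /triangle_cycle_graph /triangle_cycle_adj; lia. Qed.

Definition two_neighbours (adj : nat -> nat -> bool) (m v : nat) : Prop :=
  exists a b, [/\ a <= m, b <= m, a != b & forall u, u <= m -> adj v u = (u == a) || (u == b)].

Lemma card_two_neighbours m (adj : nat -> nat -> bool) (e : rel 'I_m.+1) (v : 'I_m.+1) :
  (forall u w : 'I_m.+1, e u w = adj u w) -> two_neighbours adj m v -> #|e v| = 2.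
Proof.
move=> eE [a [b [am bm ab adjE]]].
rewrite (eq_card (B := pred2 (inord a : 'I_m.+1) (inord b))) => [|u].
  by rewrite card2 -(inj_eq val_inj) /= !inordK ?ab.
rewrite !inE [_ \in _]eE adjE; last by rewrite -ltnS.
by rewrite -!val_eqE /= !inordK.
Qed.

Lemma cycle_adj_two_neighbours m v : 1 < m -> v <= m -> two_neighbours (cycle_adj m) m v.
Proof.
move=> m_gt1 vm; rewrite /two_neighbours /cycle_adj.
have [->|v_gt0] := posnP v; first by exists 1, m; split=> //; lia.
have [->|v_ltm] := eqVneq v m; first by exists m.-1, 0; split=> //; lia.
by exists v.-1, v.+1; split=> //; lia.
Qed.

Lemma cycle_graph_regular m : 1 < m -> forall v, #|cycle_graph m v| = 2.
Proof.
move=> m_gt1 v; apply: card_two_neighbours => //.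
by apply: cycle_adj_two_neighbours => //; rewrite -ltnS.
Qed.

Lemma triangle_cycle_adj_two_neighbours m v :
  4 < m -> v <= m -> two_neighbours (triangle_cycle_adj m) m v.
Proof.
move=> m_gt4 vm; rewrite /two_neighbours /triangle_cycle_adj.
have [->|v0] := eqVneq v 0; first by exists 1, 2; split=> //; lia.
have [->|v1] := eqVneq v 1; first by exists 0, 2; split=> //; lia.
have [->|v2] := eqVneq v 2; first by exists 0, 1; split=> //; lia.
have [->|v3] := eqVneq v 3; first by exists 4, m; split=> //; lia.
have [->|vm'] := eqVneq v m; first by exists m.-1, 3; split=> //; lia.
by exists v.-1, v.+1; split=> //; lia.
Qed.

Lemma triangle_cycle_graph_regular m : 4 < m -> forall v, #|triangle_cycle_graph m v| = 2.
Proof.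
move=> m_gt4 v; apply: card_two_neighbours => //.
by apply: triangle_cycle_adj_two_neighbours => //; rewrite -ltnS.
Qed.

Lemma cycle_graph_triangle_free m (u v w : 'I_m.+1) : 2 < m ->
  cycle_graph m u v -> cycle_graph m v w -> cycle_graph m u w -> False.
Proof.
have := ltn_ord u; have := ltn_ord v; have := ltn_ord w.
rewrite /cycle_graph /cycle_adj; lia.
Qed.

Lemma cycle_graph_not_triangle_cycle m : 4 < m ->
  ~ isomorphic (cycle_graph m) (triangle_cycle_graph m).
Proof.
move=> m_gt4 [f [[g fK gK] f_hom]].
have g_hom u w : cycle_graph m (g u) (g w) = triangle_cycle_graph m u w.
  by rewrite f_hom !gK.
pose x i : 'I_m.+1 := inord i.
have triangle i j : i < j <= 2 -> triangle_cycle_graph m (x i) (x j).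
  by move=> ij; rewrite /triangle_cycle_graph /triangle_cycle_adj /x !inordK; lia.
have m_gt2 : 2 < m by lia.
by apply: (cycle_graph_triangle_free (u := g (x 0)) (v := g (x 1)) (w := g (x 2)) m_gt2);
  rewrite g_hom triangle.
Qed.

Theorem proposition10 (n : nat) : (6 <= n)%N ->
  exists eG eH : rel 'I_n,
    [/\ is_graph eG, is_graph eH, ~ isomorphic eG eH &
      exists (k : nat) (eF : rel 'I_k), is_graph eF /\
        forall (T : nat) (R : realType),
          wl_dist R eG eH (@no_init n) (@no_init n) T = 0%R /\
          wl_dist R eG eH (sub_init eF eG) (sub_init eF eH) T = Num.sqrt 2%:R].
Proof.
case: n => [|m] //; rewrite ltnS => m_gt4.
have m_gt1 : 1 < m by lia.
have not_iso := cycle_graph_not_triangle_cycle m_gt4.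
exists (cycle_graph m), (triangle_cycle_graph m).
split; [exact: cycle_graph_is_graph (ltnW m_gt1) | exact: triangle_cycle_graph_is_graph | by [] |].
exists m.+1, (cycle_graph m); split=> [|T R]; first exact: cycle_graph_is_graph (ltnW m_gt1).
have colG s init : (forall v, init v = s) ->
    forall t v, wl_color (cycle_graph m) init t v = regular_color s 2 t.
  by move=> init_s; apply: wl_color_regular init_s (cycle_graph_regular m_gt1).
have colH s init : (forall v, init v = s) ->
    forall t v, wl_color (triangle_cycle_graph m) init t v = regular_color s 2 t.
  by move=> init_s; apply: wl_color_regular init_s (triangle_cycle_graph_regular m_gt4).
split.
- by apply: (wl_dist_same_color _ _ (colG [::] _ _) (colH [::] _ _)).
- apply: (wl_dist_distinct_color _ _ (colG [:: true] _ _) (colH [:: false] _ _)) => // [v|v|t].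
  + by rewrite /sub_init in_induced_copy_self.
  + by rewrite /sub_init in_induced_copyF.
  + by apply/eqP => /regular_color_inj.
Qed.
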